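(* Let $(\Omega,\Sigma,\mu;\phi)$ be a bimeasurable measure preserving dynamical system. Then for every $A\in\Sigma$ the minimal invariant superset $A^*$ belongs to $\Sigma_{\mathrm{inv}}$ and \[A^*=\bigcup_{m\in\mathbb{N}_0}\phi^{-m}\Bigl(\bigcup_{n\in\mathbb{N}_0}\phi^n(A)\Bigr),\qquad \mu\Bigl(A^*\,\triangle\,\bigcup_{n\in\mathbb{N}_0}\phi^n(A)\Bigr)=0.\]
   Context: A measure preserving dynamical system $(\Omega,\Sigma,\mu;\phi)$ is a probability space with a measurable map $\phi\colon\Omega\to\Omega$ such that $\mu(\phi^{-1}(A))=\mu(A)$ for all $A\in\Sigma$; it is bimeasurable if $\phi^{-1}(A),\phi(A)\in\Sigma$ for all $A\in\Sigma$. $\Sigma_{\mathrm{inv}}=\{A\in\Sigma:\phi^{-1}(A)=A\}$. For $A\subseteq\Omega$, the minimal invariant superset $A^*$ is the intersection of all sets $B\subseteq\Omega$ with $A\subseteq B$ and $\phi^{-1}(B)=B$. *)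

From HB Require Import structures.
From mathcomp Require Import all_boot all_order all_algebra.
From mathcomp Require Import all_classical all_reals all_analysis.
Set Implicit Arguments. Unset Strict Implicit. Unset Printing Implicit Defensive.
Import Order.TTheory GRing.Theory Num.Theory.
Local Open Scope classical_set_scope.
Local Open Scope ring_scope.

Definition measure_preserving {d} {R : realType} {T : measurableType d}
  (mu : probability T R) (phi : T -> T) : Prop :=
  measurable_fun setT phi /\
  (forall A : set T, measurable A -> mu (phi @^-1` A) = mu A).

Definition bimeasurable {d} {T : measurableType d} (phi : T -> T) : Prop :=
  forall A : set T, measurable A ->
    measurable (phi @^-1` A) /\ measurable (phi @` A).

Definition min_inv_superset {T : Type} (phi : T -> T) (A : set T) : set T :=
  \bigcap_(B in [set B : set T | A `<=` B /\ phi @^-1` B = B]) B.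

Definition symdiff {T : Type} (X Y : set T) : set T := (X `\` Y) `|` (Y `\` X).

(** The set [F = \bigcup_n phi^n(A)] satisfies [F ⊆ phi^-1(F)], so its saturation
    [G = \bigcup_m phi^-m(F)] is invariant; any invariant [B ⊇ A] contains every
    [phi^n(A)], hence [F], hence [G], so [G = A^*]. Bimeasurability makes [F] and
    [G] measurable, and [G \ F] is the union of the sets [phi^-m(F) \ F], each of
    measure [mu(phi^-m(F)) - mu(F) = 0] because [F ⊆ phi^-m(F)] and [phi]
    preserves [mu]. *)
From HB Require Import structures.
From mathcomp Require Import all_boot all_order all_algebra.
From mathcomp Require Import all_classical all_reals all_analysis.
Set Implicit Arguments. Unset Strict Implicit. Unset Printing Implicit Defensive.
Import Order.TTheory.

Local Open Scope classical_set_scope.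
Local Open Scope ring_scope.

Section orbits.
Variables (T : Type) (phi : T -> T).

Definition forward_orbit (A : set T) : set T := \bigcup_n (iter n phi) @` A.

Definition saturation (X : set T) : set T := \bigcup_m (iter m phi) @^-1` X.

Lemma preimage_iterSr n (X : set T) :
  iter n.+1 phi @^-1` X = phi @^-1` (iter n phi @^-1` X).
Proof. by apply/seteqP; split => x; rewrite /preimage /= -iterSr. Qed.

Lemma invariant_preimage_iter (B : set T) n :
  phi @^-1` B = B -> iter n phi @^-1` B = B.
Proof. by move=> Binv; elim: n => [//|n IH]; rewrite preimage_iterSr IH. Qed.

Lemma sub_forward_orbit (A : set T) : A `<=` forward_orbit A.
Proof. by move=> x Ax; exists 0%N => //; exists x. Qed.

Lemma forward_orbit_sub_preimage (A : set T) :
  forward_orbit A `<=` phi @^-1` forward_orbit A.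
Proof. by move=> _ [n _ [a Aa <-]]; exists n.+1 => //; exists a. Qed.

Lemma sub_saturation (X : set T) : X `<=` saturation X.
Proof. by move=> x Xx; exists 0%N. Qed.

Lemma saturation_invariant (X : set T) :
  X `<=` phi @^-1` X -> phi @^-1` saturation X = saturation X.
Proof.
move=> Xsub; apply/seteqP; split => x.
  by move=> [m _ Xm]; exists m.+1 => //; rewrite preimage_iterSr.
move=> [[|m] _ Xm]; first by exists 0%N => //; exact: Xsub.
by exists m => //; move: Xm; rewrite preimage_iterSr.
Qed.

Lemma sub_preimage_iter (X : set T) n :
  X `<=` phi @^-1` X -> X `<=` iter n phi @^-1` X.
Proof.
move=> Xsub; elim: n => [//|n IH] x Xx.
by rewrite preimage_iterSr; apply: IH; exact: Xsub.
Qed.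

Lemma invariant_forward_orbit_sub (A B : set T) :
  A `<=` B -> phi @^-1` B = B -> forward_orbit A `<=` B.
Proof.
move=> AB Binv _ [n _ [a Aa <-]].
by move: (AB a Aa); rewrite -{1}(invariant_preimage_iter n Binv).
Qed.

Lemma invariant_saturation_sub (X B : set T) :
  X `<=` B -> phi @^-1` B = B -> saturation X `<=` B.
Proof.
move=> XB Binv x [m _ Xm].
by rewrite -(invariant_preimage_iter m Binv); exact: XB.
Qed.

Lemma min_inv_supersetE (A : set T) :
  min_inv_superset phi A = saturation (forward_orbit A).
Proof.
apply/seteqP; split.
  move=> x; apply; split; last exact/saturation_invariant/forward_orbit_sub_preimage.
  by move=> a Aa; apply/sub_saturation/sub_forward_orbit.
move=> x Gx B [AB Binv].
exact: invariant_saturation_sub (invariant_forward_orbit_sub AB Binv) Binv x Gx.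
Qed.

End orbits.

Section measurability.
Context d (T : measurableType d) (phi : T -> T).

Lemma measurable_fun_iter n :
  measurable_fun setT phi -> measurable_fun setT (iter n phi).
Proof.
move=> mphi; elim: n => [|n IH]; first exact: measurable_id.
exact: measurableT_comp.
Qed.

Lemma measurable_preimage_iter n (X : set T) :
  measurable_fun setT phi -> measurable X -> measurable (iter n phi @^-1` X).
Proof.
move=> mphi mX; rewrite -[_ @^-1` _]setTI.
exact: (measurable_fun_iter n mphi) measurableT X mX.
Qed.

Lemma measurable_saturation (X : set T) :
  measurable_fun setT phi -> measurable X -> measurable (saturation phi X).
Proof.
by move=> mphi mX; apply: bigcup_measurable => m _; exact: measurable_preimage_iter.
Qed.

Lemma measurable_forward_orbit (A : set T) :
  bimeasurable phi -> measurable A -> measurable (forward_orbit phi A).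
Proof.
move=> bim mA; apply: bigcup_measurable => n _.
elim: n => [|n IH]; first by rewrite image_id.
have -> : iter n.+1 phi @` A = phi @` (iter n phi @` A) by rewrite -image_comp.
exact: (bim _ IH).2.
Qed.

End measurability.

Section preservation.
Context d (R : realType) (T : measurableType d) (mu : probability T R) (phi : T -> T).
Hypothesis phi_mp : measure_preserving mu phi.

Lemma measure_preimage_iter n (X : set T) :
  measurable X -> mu (iter n phi @^-1` X) = mu X.
Proof.
move=> mX; elim: n => [//|n IH].
by rewrite preimage_iterSr phi_mp.2 ?IH //; exact: measurable_preimage_iter phi_mp.1 mX.
Qed.

Lemma measure_preimage_iter_setD n (X : set T) : measurable X ->
  X `<=` phi @^-1` X -> mu (iter n phi @^-1` X `\` X) = 0%E.
Proof.
move=> mX Xsub; have mXn := measurable_preimage_iter n phi_mp.1 mX.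
rewrite measureD //; last exact: le_lt_trans (probability_le1 mu mXn) (ltry 1).
rewrite setIidr; last exact: sub_preimage_iter.
transitivity (mu X - mu X)%E; first by congr (_ - _)%E; exact: measure_preimage_iter.
by rewrite subee // fin_num_measure.
Qed.

Lemma measure_saturation_symdiff (X : set T) : measurable X ->
  X `<=` phi @^-1` X -> mu (symdiff (saturation phi X) X) = 0%E.
Proof.
move=> mX Xsub; rewrite /symdiff (_ : X `\` _ = set0) ?setU0; last first.
  by apply/disjoints_subset; rewrite setCK; exact: sub_saturation.
rewrite /saturation setD_bigcupl; apply: measure_negligible.
  apply: bigcup_measurable => n _; apply: measurableD => //.
  exact: measurable_preimage_iter phi_mp.1 mX.
apply: negligible_bigcup => n.
exists (iter n phi @^-1` X `\` X); split => //.
  by apply: measurableD => //; exact: measurable_preimage_iter phi_mp.1 mX.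
exact: measure_preimage_iter_setD.
Qed.

End preservation.

Theorem lemma3p5 (d : measure_display) (R : realType) (T : measurableType d)
  (mu : probability T R) (phi : T -> T) :
  measure_preserving mu phi -> bimeasurable phi ->
  forall A : set T, measurable A ->
    (measurable (min_inv_superset phi A) /\
     phi @^-1` (min_inv_superset phi A) = min_inv_superset phi A) /\
    min_inv_superset phi A =
      \bigcup_m (iter m phi) @^-1` (\bigcup_n (iter n phi) @` A) /\
    mu (symdiff (min_inv_superset phi A) (\bigcup_n (iter n phi) @` A)) = 0%E.
Proof.
move=> phi_mp bim A mA; rewrite min_inv_supersetE.
have mF := measurable_forward_orbit bim mA.
have Fsub := @forward_orbit_sub_preimage _ phi A.
split; first split.
- exact: measurable_saturation phi_mp.1 mF.
- exact: saturation_invariant Fsub.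
split => //; rewrite -/(forward_orbit phi A).
exact: (measure_saturation_symdiff phi_mp mF Fsub).
Qed.
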